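(* Let $\mathcal{I}$ be an ideal on $\omega$, let $\mathcal{A}=\{A_\alpha:\alpha<\mathfrak{c}\}$ be an almost disjoint family on $\omega$, let $\mathcal{I}^+=\{B_\alpha:\alpha<\mathfrak{c}\}$ be an enumeration, and let $\{P_n:n\in\omega\}$ be a partition of $\omega$ with $P_n\in\mathcal{I}$ for all $n$. Let $\rho^{(\mathcal{I})}$ be the associated function. Then: (1) $\rho^{(\mathcal{I})}$ is partition regular; (2) $\mathcal{I}_{\rho^{(\mathcal{I})}}=\mathcal{I}$; (3) $\rho^{(\mathcal{I})}$ has small accretions; (4) if $\mathcal{I}\in P^-$, then $\rho^{(\mathcal{I})}\in P^-$; (5) $\rho^{(\mathcal{I})}\in(S_2)$.
   Context: An ideal on $\omega$: $\mathcal{I}\subseteq\mathcal{P}(\omega)$ with $\emptyset\in\mathcal{I}$, $\omega\notin\mathcal{I}$, closed under finite unions and subsets, containing all finite sets; $\mathcal{I}^+=\mathcal{P}(\omega)\setminus\mathcal{I}$. An almost disjoint family on $\omega$ is a family of infinite subsets of $\omega$ any two distinct members of which have finite intersection (here the $A_\alpha$ are pairwise distinct). Definition of $\rho^{(\mathcal{I})}$: let $\overline{\mathcal{A}}=\{A\setminus K:A\in\mathcal{A},K\in[\omega]^{<\omega}\}$ and define $\rho^{(\mathcal{I})}\colon\overline{\mathcal{A}}\to[\omega]^\omega$ by $\rho^{(\mathcal{I})}(A_\alpha\setminus K)=B_\alpha\setminus\bigcup\{P_n:n<\max(K\cap A_\alpha)\}$, with the convention $\max\emptyset=0$. Partition regular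 function: $\Lambda,\Omega$ countably infinite, $\mathcal{F}$ a nonempty family of infinite subsets of $\Omega$ with $F\setminus K\in\mathcal{F}$ for $F\in\mathcal{F}$, $K$ finite; $\rho\colon\mathcal{F}\to[\Lambda]^\omega$ is partition regular if (M) $E\subseteq F\Rightarrow\rho(E)\subseteq\rho(F)$; (R) if $F\in\mathcal{F}$ and $\rho(F)=A\cup B$ then some $E\in\mathcal{F}$ has $\rho(E)\subseteq A$ or $\rho(E)\subseteq B$; (S) for every $E\in\mathcal{F}$ there is $F\in\mathcal{F}$, $F\subseteq E$, such that every $a\in\rho(F)$ satisfies $a\notin\rho(F\setminus K)$ for some finite $K\subseteq\Omega$. $\mathcal{I}_\rho=\{A\subseteq\Lambda:\forall F\in\mathcal{F}\ \rho(F)\not\subseteq A\}$. $\rho$ has small accretions if for every $E\in\mathcal{F}$ there is $F\in\mathcal{F}$, $F\subseteq E$, with $\rho(F)\setminus\rho(F\setminus K)\in\mathcal{I}_\rho$ for every finite $K\subseteq\Omega$. $\rho\in P^-$: for every decreasing $A_0\supseteq A_1\supseteq\dots$ of subsets of $\Lambda$ with $A_0\notin\mathcal{I}_\rho$ and $A_n\setminus A_{n+1}\in\mathcal{I}_\rho$, there is $F\in\mathcal{F}$ with $\rho(F)\subseteq A_0$ such that for each $n$ some finite $K\subseteq\Omega$ has $\rho(F\setminus K)\subseteq A_n$. For an ideal $\mathcal{I}$, $\mathcal{I}\in P^-$ means $\rho_{\mathcal{I}}\in P^-$, where $\rho_{\mathcal{I}}\colon\mathcal{I}^+\to[\omega]^\omega$,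 $\rho_{\mathcal{I}}(A)=A$; equivalently, for every decreasing $A_0\supseteq A_1\supseteq\dots$ with $A_0\in\mathcal{I}^+$ and $A_n\setminus A_{n+1}\in\mathcal{I}$ there is $B\in\mathcal{I}^+$, $B\subseteq A_0$, with $B\setminus A_n$ finite for all $n$. $\rho\in(S_2)$: for every $E\in\mathcal{F}$ there is $F\in\mathcal{F}$, $F\subseteq E$, such that for every $B\subseteq\rho(F)$ with $B\notin\mathcal{I}_\rho$ there is $G\in\mathcal{F}$ with $\rho(G)\subseteq B$ and for every finite $K\subseteq\Omega$ there is a finite $L\subseteq\Omega$ with $\rho(G\setminus L)\subseteq\rho(F\setminus K)$. *)

From mathcomp Require Import all_boot.
From mathcomp Require Import boolp classical_sets cardinality.
Set Implicit Arguments. Unset Strict Implicit. Unset Printing Implicit Defensive.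
Local Open Scope classical_set_scope.

Definition is_ideal (I : set (set nat)) : Prop :=
  [/\ I set0, ~ I setT,
      (forall X Y, I X -> I Y -> I (X `|` Y)),
      (forall X Y, Y `<=` X -> I X -> I Y) &
      (forall X, finite_set X -> I X)].

Definition almost_disjoint_family (T : Type) (A : T -> set nat) : Prop :=
  [/\ (forall a, infinite_set (A a)), injective A &
      (forall a b, a <> b -> finite_set (A a `&` A b))].

Definition is_partition (P : nat -> set nat) : Prop :=
  [/\ (forall n, P n !=set0),
      (forall n m, n <> m -> P n `&` P m = set0) &
      (forall x, exists n, P n x)].

Definition barA (T : Type) (A : T -> set nat) : set (set nat) :=
  [set E | exists a K, finite_set K /\ E = A a `\` K].

(* rho^(I)(A_a \ K) = B_a \ U{P_n : n < max (K cap A_a)}, max set0 = 0.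
   Note n < max(K cap A_a) (with max set0 = 0) iff exists k in K cap A_a, n < k
   (K finite); this is how the index set is written below.
   The representation (a, K) is chosen classically; the value does not depend
   on it when A is an almost disjoint family of distinct sets.
   Outside barA the value is irrelevant (set to set0). *)
Definition rhoI (T : Type) (A B : T -> set nat) (P : nat -> set nat)
    (E : set nat) : set nat :=
  match pselect (exists aK : T * set nat, finite_set aK.2 /\ E = A aK.1 `\` aK.2)
  with
  | left h => let aK := projT1 (cid h) in
      B aK.1 `\` \bigcup_(n in [set n | exists k, aK.2 k /\ A aK.1 k /\ (n < k)%N]) P n
  | right _ => set0
  end.

(* Partition regular functions with Lambda = Omega = nat.
   Fam is the domain family, rho is given as a total function whose
   values outside Fam are irrelevant. *)
Definition partition_regular (Fam : set (set nat)) (rho : set nat -> set nat) : Prop :=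
  [/\ (Fam !=set0 /\
       (forall F, Fam F -> infinite_set F) /\
       (forall F K, Fam F -> finite_set K -> Fam (F `\` K))),
      (forall F, Fam F -> infinite_set (rho F)),
      (forall E F, Fam E -> Fam F -> E `<=` F -> rho E `<=` rho F),
      (forall F X Y, Fam F -> rho F = X `|` Y ->
         exists2 E, Fam E & (rho E `<=` X \/ rho E `<=` Y)) &
      (forall E, Fam E -> exists2 F, Fam F /\ F `<=` E &
         forall a, rho F a -> exists K, finite_set K /\ ~ rho (F `\` K) a)].

Definition I_rho (Fam : set (set nat)) (rho : set nat -> set nat) : set (set nat) :=
  [set X | forall F, Fam F -> ~ (rho F `<=` X)].

Definition small_accretions (Fam : set (set nat)) (rho : set nat -> set nat) : Prop :=
  forall E, Fam E -> exists2 F, Fam F /\ F `<=` E &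
    forall K, finite_set K -> I_rho Fam rho (rho F `\` rho (F `\` K)).

Definition Pminus (Fam : set (set nat)) (rho : set nat -> set nat) : Prop :=
  forall An : nat -> set nat,
    (forall n, An n.+1 `<=` An n) ->
    ~ I_rho Fam rho (An 0) ->
    (forall n, I_rho Fam rho (An n `\` An n.+1)) ->
    exists2 F, Fam F /\ rho F `<=` An 0 &
      forall n, exists K, finite_set K /\ rho (F `\` K) `<=` An n.

(* I in P^- means rho_I in P^-, rho_I : I^+ -> [omega]^omega, rho_I A = A *)
Definition ideal_Pminus (I : set (set nat)) : Prop := Pminus (~` I) id.

Definition S2 (Fam : set (set nat)) (rho : set nat -> set nat) : Prop :=
  forall E, Fam E -> exists2 F, Fam F /\ F `<=` E &
    forall X, X `<=` rho F -> ~ I_rho Fam rho X ->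
      exists2 G, Fam G /\ rho G `<=` X &
        forall K, finite_set K -> exists L, finite_set L /\
          rho (G `\` L) `<=` rho (F `\` K).

(* rho (A_a \ K) is B_a minus finitely many blocks P_n, i.e. minus a set of
   the ideal, so every value of rho is I-positive; conversely every I-positive
   set is some B_c = rho (A_c).  This gives I_rho = I and the Ramsey property.
   Removing finitely many points from A_a \ K removes only finitely many blocks
   from its image, so accretions lie in the ideal, while removing one large
   point of A_a removes any prescribed initial segment of blocks; combining
   the two yields (S), P^- and (S_2). *)

From mathcomp Require Import all_boot.
From mathcomp Require Import boolp classical_sets cardinality.
From mathcomp Require Import zify.
Unset Printing Implicit Defensive.
Local Open Scope classical_set_scope.

Lemma finite_nat_bounded {X : set nat} : finite_set X -> exists N, X `<=` `I_N.
Proof.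
move/finite_seqP => [s ->]; elim: s => [|y s [N sN]]; first by exists 0.
by exists (maxn y.+1 N) => x /=; rewrite inE => /orP [/eqP ->|/sN /=]; lia.
Qed.

Lemma infinite_nat_gt {X : set nat} (N : nat) :
  infinite_set X -> exists2 k, X k & (N < k)%N.
Proof.
move=> /infinite_setD/(_ (finite_II N.+1))/infinite_setN0 [k [Xk /negP]].
by rewrite /= -leqNgt => Nk; exists k.
Qed.

Lemma almost_disjoint_setD_sub {T : Type} {A : T -> set nat} {a b : T}
    {K K' : set nat} :
  almost_disjoint_family A -> finite_set K ->
  A a `\` K `<=` A b `\` K' -> a = b.
Proof.
move=> [Ainf _ Aad] fK sub; apply: contrapT => ab.
apply: (infinite_setD (Ainf a) fK); apply: sub_finite_set (Aad _ _ ab) => x Hx.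
by split; [case: Hx | case: (sub _ Hx)].
Qed.

Lemma finite_sub_bigcup_lt (P : nat -> set nat) {K : set nat} :
  (forall x, exists n, P n x) -> finite_set K -> exists N, K `<=` \bigcup_(n < N) P n.
Proof.
move=> coverP fK; pose idx x := projT1 (cid (coverP x)).
have [N idxN] := finite_nat_bounded (finite_image idx fK).
by exists N => x Kx; exists (idx x); [exact: idxN | exact: projT2 (cid (coverP x))].
Qed.

Section Ideal.
Context {I : set (set nat)} (idealI : is_ideal I).

Lemma nonideal_infinite X : ~ I X -> infinite_set X.
Proof. by case: idealI => _ _ _ _ Ifin nX /Ifin. Qed.

Lemma nonideal_setD X U : ~ I X -> I U -> ~ I (X `\` U).
Proof.
case: idealI => _ _ IU Isub _ nX IU' IXU; apply: nX.
by apply: Isub (IU _ _ IXU IU') => x Xx; have [Ux|Ux] := pselect (U x); [right|left].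
Qed.

Lemma ideal_bigcup_lt {P : nat -> set nat} :
  (forall n, I (P n)) -> forall N, I (\bigcup_(n < N) P n).
Proof.
case: idealI => I0 _ IU Isub _ idealP; elim=> [|N IH].
  by apply: Isub I0 => x [n] /=; rewrite ltn0.
apply: Isub (IU _ _ IH (idealP N)) => x [n /= nN Pnx].
have [nN'|Nn] := ltnP n N; first by left; exists n.
by right; have <- : n = N by lia.
Qed.

Lemma I_rho_id : I_rho (~` I) id = I.
Proof.
case: idealI => _ _ _ Isub _; apply/seteqP; split => X.
  by move=> HX; apply: contrapT => nX; apply: (HX X nX).
by move=> IX F nF FX; apply: nF; apply: Isub FX IX.
Qed.

End Ideal.

Section RhoI.
Context {T : Type} {I : set (set nat)} {A B : T -> set nat} {P : nat -> set nat}.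
Hypotheses (idealI : is_ideal I) (adA : almost_disjoint_family A).
Hypotheses (posB : forall a, ~ I (B a)) (ontoB : forall X, ~ I X -> exists a, B a = X).
Hypotheses (coverP : forall x, exists n, P n x) (idealP : forall n, I (P n)).

Local Notation rho := (rhoI A B P).
Local Notation Fam := (barA A).

Definition Pbelow a K := \bigcup_(n in [set n | exists k, K k /\ A a k /\ (n < k)%N]) P n.

Lemma Pbelow_sub_bigcup a K N : K `<=` `I_N -> Pbelow a K `<=` \bigcup_(n < N) P n.
Proof. by move=> KN x [n [k [/KN /= kN [_ nk]]] Pnx]; exists n => //=; lia. Qed.

Lemma bigcup_sub_Pbelow a K k N :
  K k -> A a k -> (N <= k)%N -> \bigcup_(n < N) P n `<=` Pbelow a K.
Proof.
by move=> Kk Ak Nk x [n /= nN Pnx]; exists n => //; exists k; split; [|split; [|lia]].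
Qed.

Lemma Pbelow_subset a K K' : K' `&` A a `<=` K -> Pbelow a K' `<=` Pbelow a K.
Proof.
by move=> sK x [n [k [K'k [Ak nk]]] Pnx]; exists n => //; exists k; split; first exact: sK.
Qed.

Lemma ideal_Pbelow a K : finite_set K -> I (Pbelow a K).
Proof.
move=> /finite_nat_bounded [N KN]; case: idealI => _ _ _ Isub _.
exact: Isub _ _ (Pbelow_sub_bigcup a K N KN) (ideal_bigcup_lt idealI idealP N).
Qed.

Lemma rhoI_setD a K : finite_set K -> rho (A a `\` K) = B a `\` Pbelow a K.
Proof.
move=> fK; rewrite /rhoI; case: pselect => [h|h]; last by case: h; exists (a, K).
case: (cid h) => [[a' K'] /= [fK' E]] /=.
(* almost disjointness pins down the index, after which K and K' agree on A a *)
have sub : A a' `\` K' `<=` A a `\` K by rewrite E.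
have aa' := almost_disjoint_setD_sub adA fK' sub; subst a'.
congr (_ `\` _); apply/seteqP; split => x [n [k [Kk [Ak nk]]] Pnx];
  exists n => //; exists k; split => //; apply: contrapT => nKk.
- have : (A a `\` K) k by split.
  by rewrite E => -[].
- have : (A a `\` K') k by split.
  by rewrite -E => -[].
Qed.

Lemma rhoI_A a : rho (A a) = B a.
Proof.
have := rhoI_setD a set0 (finite_set0 nat); rewrite setD0 => ->.
by apply/seteqP; split => [x []//|x Bx]; split => // -[n [k []]].
Qed.

Lemma barA_A a : Fam (A a).
Proof. by exists a, set0; rewrite setD0; split => //; exact: finite_set0. Qed.

Lemma barA_setD F K : Fam F -> finite_set K -> Fam (F `\` K).
Proof.
move=> [a [K0 [fK0 ->]]] fK; exists a, (K0 `|` K).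
by rewrite setDDl finite_setU.
Qed.

Lemma rhoI_onto X : ~ I X -> exists2 G, Fam G & rho G = X.
Proof. by move=> /ontoB [c <-]; exists (A c); [exact: barA_A | exact: rhoI_A]. Qed.

Lemma rhoI_nonideal F : Fam F -> ~ I (rho F).
Proof.
move=> [a [K [fK ->]]]; rewrite rhoI_setD //.
exact: nonideal_setD idealI _ _ (posB a) (ideal_Pbelow a K fK).
Qed.

Lemma I_rho_rhoI : I_rho Fam rho = I.
Proof.
case: idealI => _ _ _ Isub _; apply/seteqP; split => X.
  by move=> HX; apply: contrapT => /rhoI_onto [G FG GX]; apply: (HX G FG); rewrite GX.
by move=> IX F FF FX; apply: (rhoI_nonideal F FF); apply: Isub FX IX.
Qed.

Lemma rhoI_mono E F : Fam E -> Fam F -> E `<=` F -> rho E `<=` rho F.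
Proof.
move=> [a [K [fK ->]]] [b [K' [fK' ->]]] EF.
have ab := almost_disjoint_setD_sub adA fK EF; subst b.
rewrite !rhoI_setD // => x [Bx nKx]; split => //; apply: contra_not nKx.
apply: Pbelow_subset => k [K'k Ak]; apply: contrapT => nKk.
by have [] := EF k (conj Ak nKk).
Qed.

Lemma rhoI_setD_sub F K : Fam F -> finite_set K -> rho (F `\` K) `<=` rho F.
Proof. by move=> FF fK; apply: rhoI_mono => //; exact: barA_setD. Qed.

Lemma rhoI_avoids_bigcup F N :
  Fam F -> exists2 K, finite_set K & rho (F `\` K) `<=` ~` \bigcup_(n < N) P n.
Proof.
case: adA => Ainf _ _ [a [K0 [fK0 ->]]].
have [k Ak Nk] := infinite_nat_gt N (Ainf a).
exists [set k]; first exact: finite_set1.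
rewrite setDDl rhoI_setD; last by rewrite finite_setU; split => //; exact: finite_set1.
move=> x [_ nPx]; apply: contra_not nPx; apply: (bigcup_sub_Pbelow a _ k) => //.
  by right.
exact: ltnW.
Qed.

Lemma rhoI_minus_bigcup_sub F K : Fam F -> finite_set K ->
  exists N, rho F `\` \bigcup_(n < N) P n `<=` rho (F `\` K).
Proof.
move=> [a [K0 [fK0 ->]]] fK; have fK0K : finite_set (K0 `|` K) by rewrite finite_setU.
have [N KN] := finite_nat_bounded fK0K; exists N.
rewrite setDDl !rhoI_setD // => x [[Bx _] nPx]; split => //.
exact: contra_not (Pbelow_sub_bigcup a _ N KN x) nPx.
Qed.

Lemma partition_regular_rhoI : partition_regular Fam rho.
Proof.
have [_ IT IU _ _] := idealI; have [Ainf _ _] := adA.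
split.
- split; first by have [a _] := ontoB _ IT; exists (A a); exact: barA_A.
  split; last exact: barA_setD.
  by move=> F [a [K [fK ->]]]; exact: infinite_setD.
- by move=> F FF; exact: nonideal_infinite idealI _ (rhoI_nonideal F FF).
- exact: rhoI_mono.
- move=> F X Y FF rhoF.
  have [IX|/rhoI_onto [G FG GX]] := pselect (I X); last by exists G; [|left; rewrite GX].
  have [IY|/rhoI_onto [G FG GY]] := pselect (I Y); last by exists G; [|right; rewrite GY].
  by case: (rhoI_nonideal F FF); rewrite rhoF; exact: IU.
- move=> E FE; exists E; first by split.
  move=> x _; have [n Pnx] := coverP x.
  have [K fK EK] := rhoI_avoids_bigcup E n.+1 FE.
  by exists K; split => // /EK; apply; exists n => /=.
Qed.

Lemma small_accretions_rhoI : small_accretions Fam rho.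
Proof.
move=> E FE; exists E; first by split.
move=> K fK; rewrite I_rho_rhoI.
have [N EK] := rhoI_minus_bigcup_sub E K FE fK; have [_ _ _ Isub _] := idealI.
apply: Isub (ideal_bigcup_lt idealI idealP N) => x [Ex nEKx].
by apply: contrapT => nPx; exact: nEKx (EK x (conj Ex nPx)).
Qed.

Lemma Pminus_rhoI : ideal_Pminus I -> Pminus Fam rho.
Proof.
rewrite /ideal_Pminus /Pminus I_rho_rhoI (I_rho_id idealI) => PI An decr nI0 Idiff.
have [F [nF F0] FK] := PI An decr nI0 Idiff.
have [G FG GF] := rhoI_onto F nF; exists G; first by split; last rewrite GF.
move=> n; have [K [fK FKn]] := FK n.
have [N KN] := finite_sub_bigcup_lt P coverP fK.
have [L fL GL] := rhoI_avoids_bigcup G N FG.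
exists L; split => // x GLx; apply: FKn; split.
  by rewrite -GF; exact: rhoI_setD_sub G L FG fL x GLx.
by move=> /KN; exact: GL x GLx.
Qed.

Lemma S2_rhoI : S2 Fam rho.
Proof.
move=> E FE; exists E; first by split.
move=> X XE; rewrite I_rho_rhoI => nX.
have [G FG GX] := rhoI_onto X nX; exists G; first by split; last rewrite GX.
move=> K fK; have [N EK] := rhoI_minus_bigcup_sub E K FE fK.
have [L fL GL] := rhoI_avoids_bigcup G N FG.
exists L; split => // x GLx; apply: EK; split; last exact: GL.
by apply: XE; rewrite -GX; exact: rhoI_setD_sub G L FG fL x GLx.
Qed.

End RhoI.

Theorem proposition5p2 (T : Type) (I : set (set nat)) (A B : T -> set nat)
  (P : nat -> set nat) :
  is_ideal I ->
  almost_disjoint_family A ->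
  (forall a, ~ I (B a)) -> (forall X, ~ I X -> exists a, B a = X) ->
  is_partition P -> (forall n, I (P n)) ->
  [/\ partition_regular (barA A) (rhoI A B P),
      I_rho (barA A) (rhoI A B P) = I,
      small_accretions (barA A) (rhoI A B P),
      (ideal_Pminus I -> Pminus (barA A) (rhoI A B P)) &
      S2 (barA A) (rhoI A B P)].
Proof.
move=> idealI adA posB ontoB [_ _ coverP] idealP; split.
- exact: partition_regular_rhoI idealI adA posB ontoB coverP idealP.
- exact: I_rho_rhoI idealI adA posB ontoB idealP.
- exact: small_accretions_rhoI idealI adA posB ontoB idealP.
- exact: Pminus_rhoI idealI adA posB ontoB coverP idealP.
- exact: S2_rhoI idealI adA posB ontoB idealP.
Qed.
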